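(* There is $R_0$ such that the following holds for $R\ge R_0$ with $R^2\in\mathbb{Z}$. Let $\mathcal{E}=\mathbb{Z}^3\cap\{x:|x|=R\}$ and let $\mathcal{G}$ be the graph on the vertex set $\mathcal{E}$ in which $m,n\in\mathcal{E}$ are joined when $|m-n|<R^{1/5}$. Then each connected component of $\mathcal{G}$ is contained in an affine plane of $\mathbb{R}^3$. *)

From Stdlib Require Export Reals Relations.
Open Scope R_scope.

Definition zpt : Type := (Z * Z * Z)%type.

Definition px (m : zpt) : R := let '(a, _, _) := m in IZR a.
Definition py (m : zpt) : R := let '(_, b, _) := m in IZR b.
Definition pz (m : zpt) : R := let '(_, _, c) := m in IZR c.

Definition norm3 (m : zpt) : R := sqrt (px m ^ 2 + py m ^ 2 + pz m ^ 2).
Definition dist3 (m n : zpt) : R :=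
  sqrt ((px m - px n) ^ 2 + (py m - py n) ^ 2 + (pz m - pz n) ^ 2).

Definition on_sphere (Rad : R) (m : zpt) : Prop := norm3 m = Rad.

Definition adj (Rad : R) (m n : zpt) : Prop :=
  on_sphere Rad m /\ on_sphere Rad n /\ dist3 m n < Rpower Rad (1/5).

Definition gconnected (Rad : R) : relation zpt := clos_refl_trans zpt (adj Rad).

Definition component (Rad : R) (m : zpt) (n : zpt) : Prop :=
  on_sphere Rad n /\ gconnected Rad m n.

Definition in_affine_plane (S : zpt -> Prop) : Prop :=
  exists a b c d : R, (a <> 0 \/ b <> 0 \/ c <> 0) /\
    forall n, S n -> a * px n + b * py n + c * pz n = d.

From Stdlib Require Import Reals Relations Lra Lia Psatz ZArith Classical.
Open Scope R_scope.

(* Let t = R^(1/5). For lattice points a, b, c, d on the sphere |x| = R with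
   squared chords |b - a|^2, |c - a|^2, |d - a|^2 at most K, the integer
   det(b - a, c - a, d - a) satisfies det^2 R^2 <= 9/4 K^4; for K = 28 t^2 and
   t large this forces det = 0, so any four such points are coplanar. Three
   distinct points of a sphere are never collinear, hence the plane through
   three points of a component near a vertex a contains every point of the
   component near a, and the plane is carried along the edges of the graph. *)

Record vec3 := Vec3 { cx : R; cy : R; cz : R }.

Definition vec (m : zpt) : vec3 := Vec3 (px m) (py m) (pz m).
Definition vadd (a b : vec3) := Vec3 (cx a + cx b) (cy a + cy b) (cz a + cz b).
Definition vsub (a b : vec3) := Vec3 (cx a - cx b) (cy a - cy b) (cz a - cz b).
Definition vscale (c : R) (a : vec3) := Vec3 (c * cx a) (c * cy a) (c * cz a).
Definition dot (a b : vec3) := cx a * cx b + cy a * cy b + cz a * cz b.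
Definition cross (a b : vec3) :=
  Vec3 (cy a * cz b - cz a * cy b) (cz a * cx b - cx a * cz b)
       (cx a * cy b - cy a * cx b).
Definition n2 (a : vec3) := dot a a.
Definition det (u v w : vec3) := dot (cross u v) w.

Ltac vec_ring :=
  repeat match goal with v : vec3 |- _ => destruct v end;
  unfold vadd, vsub, vscale, n2, det, dot, cross; simpl;
  first [ring | f_equal; ring].

Lemma n2_nonneg a : 0 <= n2 a.
Proof. destruct a; unfold n2, dot; simpl; nra. Qed.

Lemma n2_eq0 a : n2 a = 0 -> a = Vec3 0 0 0.
Proof.
  destruct a as [a1 a2 a3]; unfold n2, dot; simpl; intros H.
  pose proof (Rle_0_sqr a1); pose proof (Rle_0_sqr a2); pose proof (Rle_0_sqr a3).
  unfold Rsqr in *.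
  assert (E1 : a1 * a1 = 0) by lra; assert (E2 : a2 * a2 = 0) by lra;
  assert (E3 : a3 * a3 = 0) by lra.
  apply Rmult_integral in E1, E2, E3.
  f_equal; lra.
Qed.

Lemma n2_sub_eq0 a b : n2 (vsub a b) = 0 -> a = b.
Proof.
  intros H; apply n2_eq0 in H.
  destruct a, b; unfold vsub in H; simpl in H; injection H as E1 E2 E3.
  f_equal; lra.
Qed.

Lemma n2_sub_sym a b : n2 (vsub a b) = n2 (vsub b a).
Proof. vec_ring. Qed.

Lemma n2_sub_le a b c : n2 (vsub a c) <= 2 * (n2 (vsub a b) + n2 (vsub b c)).
Proof.
  assert (2 * (n2 (vsub a b) + n2 (vsub b c)) - n2 (vsub a c)
          = n2 (vsub (vadd a c) (vscale 2 b))) by vec_ring.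
  pose proof (n2_nonneg (vsub (vadd a c) (vscale 2 b))); lra.
Qed.

Lemma n2_scale c a : n2 (vscale c a) = c ^ 2 * n2 a.
Proof. vec_ring. Qed.

Lemma n2_add3_le a b c : n2 (vadd a (vadd b c)) <= 3 * (n2 a + n2 b + n2 c).
Proof.
  assert (3 * (n2 a + n2 b + n2 c) - n2 (vadd a (vadd b c))
          = n2 (vsub a b) + n2 (vsub b c) + n2 (vsub a c)) by vec_ring.
  pose proof (n2_nonneg (vsub a b)); pose proof (n2_nonneg (vsub b c));
  pose proof (n2_nonneg (vsub a c)); lra.
Qed.

Lemma dot_sub a b c : dot a (vsub b c) = dot a b - dot a c.
Proof. vec_ring. Qed.

Lemma dot_cross_l u v : dot (cross u v) u = 0.
Proof. vec_ring. Qed.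

Lemma dot_cross_r u v : dot (cross u v) v = 0.
Proof. vec_ring. Qed.

Lemma dot_cross_cross u v w :
  dot (cross u v) (cross u w) = n2 u * dot v w - dot u w * dot u v.
Proof. vec_ring. Qed.

Lemma n2_cross u v : n2 (cross u v) = n2 u * n2 v - dot u v ^ 2.
Proof. vec_ring. Qed.

Lemma n2_cross_le u v : n2 (cross u v) <= n2 u * n2 v.
Proof. rewrite n2_cross; pose proof (pow2_ge_0 (dot u v)); lra. Qed.

Lemma vscale_det u v w A :
  vscale (det u v w) A =
  vadd (vscale (dot A u) (cross v w))
       (vadd (vscale (dot A v) (cross w u)) (vscale (dot A w) (cross u v))).
Proof. vec_ring. Qed.

Lemma dot_chord A B : n2 B = n2 A -> dot A (vsub B A) = - n2 (vsub B A) / 2.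
Proof.
  intros HB. assert (n2 B = n2 A + 2 * dot A (vsub B A) + n2 (vsub B A)) by vec_ring.
  lra.
Qed.

(* Expand A in the basis dual to u, v, w; each coefficient A.u = -|u|^2/2 is
   small because u is a chord of the sphere. *)
Lemma det_sq_mul_n2_le A B C D K :
  n2 B = n2 A -> n2 C = n2 A -> n2 D = n2 A ->
  n2 (vsub B A) <= K -> n2 (vsub C A) <= K -> n2 (vsub D A) <= K ->
  det (vsub B A) (vsub C A) (vsub D A) ^ 2 * n2 A <= 9 / 4 * K ^ 4.
Proof.
  intros HB HC HD Hu Hv Hw.
  pose proof (dot_chord A B HB) as Au; pose proof (dot_chord A C HC) as Av;
  pose proof (dot_chord A D HD) as Aw.
  set (u := vsub B A) in *; set (v := vsub C A) in *; set (w := vsub D A) in *.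
  pose proof (n2_nonneg u); pose proof (n2_nonneg v); pose proof (n2_nonneg w).
  assert (coef_le : forall a, a = - n2 u / 2 \/ a = - n2 v / 2 \/ a = - n2 w / 2 ->
                    0 <= a ^ 2 <= K ^ 2 / 4) by (intros a [-> | [-> | ->]]; nra).
  assert (cross_le : forall a b, n2 a <= K -> n2 b <= K -> 0 <= n2 (cross a b) <= K ^ 2).
  { intros a b Ha Hb; split; [apply n2_nonneg|].
    pose proof (n2_nonneg a); pose proof (n2_nonneg b); pose proof (n2_cross_le a b); nra. }
  assert (term_le : forall a X, 0 <= a ^ 2 <= K ^ 2 / 4 -> 0 <= X <= K ^ 2 ->
                    a ^ 2 * X <= K ^ 2 / 4 * K ^ 2)
    by (intros a X Ha HX; apply Rmult_le_compat; lra).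
  rewrite <- n2_scale, vscale_det.
  eapply Rle_trans; [apply n2_add3_le|]. rewrite !n2_scale.
  pose proof (term_le _ _ (coef_le (dot A u) ltac:(tauto)) (cross_le v w Hv Hw)).
  pose proof (term_le _ _ (coef_le (dot A v) ltac:(tauto)) (cross_le w u Hw Hu)).
  pose proof (term_le _ _ (coef_le (dot A w) ltac:(tauto)) (cross_le u v Hu Hv)).
  lra.
Qed.

Lemma cross_chords_neq0 A B C :
  n2 B = n2 A -> n2 C = n2 A -> B <> A -> C <> A -> C <> B ->
  n2 (cross (vsub B A) (vsub C A)) <> 0.
Proof.
  intros HB HC nBA nCA nCB Hz.
  pose proof (dot_chord A B HB) as Au; pose proof (dot_chord A C HC) as Av.
  assert (HCB : n2 (vsub C B)
                = n2 (vsub B A) - 2 * dot (vsub B A) (vsub C A) + n2 (vsub C A)) by vec_ring.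
  pose proof (n2_eq0 _ Hz) as Hzero.
  pose proof (dot_cross_cross (vsub B A) (vsub C A) A) as EA.
  rewrite n2_cross in Hz. rewrite Hzero in EA.
  set (u := vsub B A) in *; set (v := vsub C A) in *.
  assert (U0 : n2 u <> 0) by (intro E; apply nBA, n2_sub_eq0, E).
  assert (V0 : n2 v <> 0) by (intro E; apply nCA, n2_sub_eq0, E).
  assert (W0 : n2 (vsub C B) <> 0) by (intro E; apply nCB, n2_sub_eq0, E).
  assert (E0 : dot (Vec3 0 0 0) (cross u A) = 0) by vec_ring.
  rewrite E0, (Rmult_comm (dot u A)) in EA.
  replace (dot v A) with (dot A v) in EA by vec_ring.
  replace (dot u A) with (dot A u) in EA by vec_ring.
  rewrite Au, Av in EA.
  (* u x v = 0 gives |u|^2 (A.v) = (u.v)(A.u) and |u|^2 |v|^2 = (u.v)^2; with the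
     chord relations A.u = -|u|^2/2, A.v = -|v|^2/2 this forces |u|^2 = |v|^2 = u.v. *)
  assert (Vs : n2 v = dot u v).
  { apply Rmult_eq_reg_l with (n2 u); auto. nra. }
  assert (UV : n2 u = n2 v).
  { apply Rmult_eq_reg_r with (n2 v); auto. rewrite Vs at 2. nra. }
  apply W0; rewrite HCB; lra.
Qed.

Lemma dot_eq0_of_det_eq0 N u v w :
  dot N u = 0 -> dot N v = 0 -> n2 (cross u v) <> 0 -> det u v w = 0 -> dot N w = 0.
Proof.
  intros Hu Hv Huv Hw.
  assert (E : n2 (cross u v) * dot N w =
     det u v w * dot N (cross u v)
     + dot w v * (n2 u * dot N v - dot u v * dot N u)
     - dot w u * (dot u v * dot N v - n2 v * dot N u)) by vec_ring.
  rewrite Hu, Hv, Hw in E.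
  apply Rmult_eq_reg_l with (n2 (cross u v)); auto. lra.
Qed.

Definition isZ (r : R) := exists z, r = IZR z.

Lemma isZ_add a b : isZ a -> isZ b -> isZ (a + b).
Proof. intros [x ->] [y ->]; exists (x + y)%Z; rewrite plus_IZR; auto. Qed.
Lemma isZ_sub a b : isZ a -> isZ b -> isZ (a - b).
Proof. intros [x ->] [y ->]; exists (x - y)%Z; rewrite minus_IZR; auto. Qed.
Lemma isZ_mul a b : isZ a -> isZ b -> isZ (a * b).
Proof. intros [x ->] [y ->]; exists (x * y)%Z; rewrite mult_IZR; auto. Qed.
Lemma isZ_IZR z : isZ (IZR z).
Proof. exists z; auto. Qed.

Lemma isZ_det_vec a b c d :
  isZ (det (vsub (vec b) (vec a)) (vsub (vec c) (vec a)) (vsub (vec d) (vec a))).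
Proof.
  destruct a as [[a1 a2] a3], b as [[b1 b2] b3], c as [[c1 c2] c3], d as [[d1 d2] d3].
  unfold det, dot, cross, vsub, vec, px, py, pz; simpl.
  repeat (apply isZ_sub || apply isZ_add || apply isZ_mul || apply isZ_IZR).
Qed.

Lemma isZ_sq_lt1 r : isZ r -> r ^ 2 < 1 -> r = 0.
Proof.
  intros [z ->] Hlt. destruct (Z.eq_dec z 0) as [->|nz]; [reflexivity|].
  assert (Hz : (1 <= z * z)%Z) by nia.
  apply IZR_le in Hz; rewrite mult_IZR in Hz; simpl in Hlt; lra.
Qed.

Lemma vec_inj a b : vec a = vec b -> a = b.
Proof.
  destruct a as [[a1 a2] a3], b as [[b1 b2] b3]; unfold vec, px, py, pz; simpl.
  intros H; injection H as E1 E2 E3.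
  apply eq_IZR in E1; apply eq_IZR in E2; apply eq_IZR in E3; subst; reflexivity.
Qed.

Lemma lattice_det_eq0 a b c d K :
  n2 (vec b) = n2 (vec a) -> n2 (vec c) = n2 (vec a) -> n2 (vec d) = n2 (vec a) ->
  n2 (vsub (vec b) (vec a)) <= K -> n2 (vsub (vec c) (vec a)) <= K ->
  n2 (vsub (vec d) (vec a)) <= K -> 9 / 4 * K ^ 4 < n2 (vec a) ->
  det (vsub (vec b) (vec a)) (vsub (vec c) (vec a)) (vsub (vec d) (vec a)) = 0.
Proof.
  intros HB HC HD Hu Hv Hw Hlarge.
  pose proof (det_sq_mul_n2_le _ _ _ _ K HB HC HD Hu Hv Hw) as Hle.
  apply isZ_sq_lt1; [apply isZ_det_vec|].
  pose proof (pow2_ge_0 (K ^ 2)).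
  apply Rmult_lt_reg_r with (n2 (vec a)); [nra | lra].
Qed.

Lemma in_affine_plane_of_normal (S : zpt -> Prop) N p :
  n2 N <> 0 -> (forall x, S x -> dot N (vsub (vec x) (vec p)) = 0) -> in_affine_plane S.
Proof.
  intros HN HS. exists (cx N), (cy N), (cz N), (dot N (vec p)). split.
  - destruct N as [a b c]; unfold n2, dot in HN; simpl in *.
    destruct (Req_dec a 0) as [->|]; [|tauto].
    destruct (Req_dec b 0) as [->|]; [|tauto].
    right; right; intros ->; apply HN; ring.
  - intros x Hx. pose proof (HS x Hx) as E. rewrite dot_sub in E.
    unfold dot, vec in *; simpl in *; lra.
Qed.

Lemma in_affine_plane_of_pair (S : zpt -> Prop) m v :
  (forall x, S x -> x = m \/ x = v) -> in_affine_plane S.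
Proof.
  intros HS.
  destruct (Req_dec (px v) (px m)) as [Ex|Ex]; [destruct (Req_dec (py v) (py m)) as [Ey|Ey]|].
  - exists 1, 0, 0, (px m). split; [lra|].
    intros x Hx; destruct (HS x Hx); subst; lra.
  - exists (py v - py m), (px m - px v), 0, (py v * px m - px v * py m).
    split; [left; lra|]. intros x Hx; destruct (HS x Hx); subst; ring.
  - exists (py v - py m), (px m - px v), 0, (py v * px m - px v * py m).
    split; [right; left; lra|]. intros x Hx; destruct (HS x Hx); subst; ring.
Qed.

Lemma n2_vec_on_sphere Rad m : on_sphere Rad m -> n2 (vec m) = Rad ^ 2.
Proof.
  unfold on_sphere, norm3; intros <-.
  rewrite pow2_sqrt; [unfold n2, dot, vec; simpl; ring|].
  pose proof (pow2_ge_0 (px m)); pose proof (pow2_ge_0 (py m));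
  pose proof (pow2_ge_0 (pz m)); lra.
Qed.

Lemma adj_sym Rad m n : adj Rad m n -> adj Rad n m.
Proof.
  intros [Hm [Hn Hd]]; repeat split; auto. unfold dist3 in *.
  replace ((px n - px m) ^ 2 + (py n - py m) ^ 2 + (pz n - pz m) ^ 2)
    with ((px m - px n) ^ 2 + (py m - py n) ^ 2 + (pz m - pz n) ^ 2) by ring.
  exact Hd.
Qed.

Lemma adj_n2 Rad m n : adj Rad m n -> n2 (vsub (vec n) (vec m)) < Rpower Rad (1/5) ^ 2.
Proof.
  intros [_ [_ Hd]]. unfold dist3 in Hd.
  replace ((px m - px n) ^ 2 + (py m - py n) ^ 2 + (pz m - pz n) ^ 2)
    with (n2 (vsub (vec n) (vec m))) in Hd by (unfold n2, dot, vsub, vec; simpl; ring).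
  pose proof (n2_nonneg (vsub (vec n) (vec m))) as H0.
  pose proof (sqrt_sqrt _ H0); pose proof (sqrt_pos (n2 (vsub (vec n) (vec m)))).
  nra.
Qed.

Lemma gconnected_ind Rad (P : zpt -> Prop) m :
  P m -> (forall a b, gconnected Rad m a -> P a -> adj Rad a b -> P b) ->
  forall n, gconnected Rad m n -> P n.
Proof.
  intros Pm Hstep n Hn. apply clos_rt_rtn1 in Hn.
  induction Hn as [|y z Hyz Hy IH]; [exact Pm|].
  apply (Hstep y z); auto. apply clos_rtn1_rt; exact Hy.
Qed.

Lemma gconnected_sym Rad x y : gconnected Rad x y -> gconnected Rad y x.
Proof.
  induction 1; [apply rt_step, adj_sym; auto | apply rt_refl | eapply rt_trans; eauto].
Qed.

Lemma gconnected_on_sphere Rad m x :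
  on_sphere Rad m -> gconnected Rad m x -> on_sphere Rad x.
Proof.
  intros Hm. apply gconnected_ind; auto. intros a b _ _ [_ [Hb _]]; exact Hb.
Qed.

Lemma Rpower_fifth_pow x : 0 < x -> Rpower x (1/5) ^ 5 = x.
Proof.
  intros Hx. rewrite <- Rpower_pow by (unfold Rpower; apply exp_pos).
  rewrite Rpower_mult. replace (1 / 5 * INR 5) with 1 by (simpl; field).
  apply Rpower_1; exact Hx.
Qed.

Lemma pow_Rpower_fifth y : 0 < y -> Rpower (y ^ 5) (1/5) = y.
Proof.
  intros Hy. rewrite <- Rpower_pow by exact Hy.
  rewrite Rpower_mult. replace (INR 5 * (1 / 5)) with 1 by (simpl; field).
  apply Rpower_1; exact Hy.
Qed.

Definition on_plane (N : vec3) (p x : zpt) := dot N (vsub (vec x) (vec p)) = 0.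

Section Component.

Variable Rad : R.

Local Notation t := (Rpower Rad (1/5)).

Definition near (a x : zpt) := n2 (vsub (vec x) (vec a)) <= 4 * t ^ 2.

Definition triple_near (a : zpt) := exists a1 a2 a3,
  a1 <> a2 /\ a1 <> a3 /\ a2 <> a3 /\
  gconnected Rad a a1 /\ gconnected Rad a a2 /\ gconnected Rad a a3 /\
  near a a1 /\ near a a2 /\ near a a3.

Lemma triple_near_or_pair v :
  triple_near v \/ exists v', forall x, gconnected Rad v x -> x = v \/ x = v'.
Proof.
  assert (T0 : 0 <= t ^ 2) by apply pow2_ge_0.
  assert (Nv : near v v) by (unfold near; replace (n2 _) with 0 by vec_ring; lra).
  destruct (classic (exists w, adj Rad v w /\ w <> v)) as [[w [Hw nwv]]|Hno].
  - destruct (classic (exists z, (adj Rad v z \/ adj Rad w z) /\ z <> v /\ z <> w))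
      as [[z [Hz [nzv nzw]]]|Hno2].
    + left. pose proof (adj_n2 _ _ _ Hw) as Dw.
      exists v, w, z. do 3 (split; [congruence|]).
      split; [apply rt_refl|]. split; [apply rt_step; exact Hw|].
      split; [destruct Hz; [apply rt_step | eapply rt_trans; apply rt_step]; eauto|].
      split; [exact Nv|]. split; [unfold near; lra|].
      unfold near. destruct Hz as [Hz|Hz]; pose proof (adj_n2 _ _ _ Hz).
      * lra.
      * pose proof (n2_sub_le (vec z) (vec w) (vec v)). lra.
    + right. exists w.
      apply gconnected_ind; [left; reflexivity|]. intros a b _ Ha Hab.
      destruct (classic (b = v)); [left; auto|]. destruct (classic (b = w)); [right; auto|].
      exfalso; apply Hno2. exists b. destruct Ha; subst; auto.
  - right. exists v.
    apply gconnected_ind; [left; reflexivity|]. intros a b _ Ha Hab.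
    destruct (classic (b = v)); [left; auto|].
    exfalso; apply Hno. exists b. destruct Ha as [->| ->]; auto.
Qed.

Hypothesis Rad_large : 2000 ^ 5 <= Rad.

Lemma Rpower_fifth_ge2000 : 2000 <= t.
Proof.
  rewrite <- (pow_Rpower_fifth 2000) by lra.
  apply Rle_Rpower_l; [lra|]. pose proof (pow_lt 2000 5 ltac:(lra)); lra.
Qed.

Lemma det_eq0_of_chords_le a b c d :
  on_sphere Rad a -> on_sphere Rad b -> on_sphere Rad c -> on_sphere Rad d ->
  n2 (vsub (vec b) (vec a)) <= 28 * t ^ 2 -> n2 (vsub (vec c) (vec a)) <= 28 * t ^ 2 ->
  n2 (vsub (vec d) (vec a)) <= 28 * t ^ 2 ->
  det (vsub (vec b) (vec a)) (vsub (vec c) (vec a)) (vsub (vec d) (vec a)) = 0.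
Proof.
  intros Sa Sb Sc Sd Hb Hc Hd.
  apply n2_vec_on_sphere in Sa, Sb, Sc, Sd.
  apply lattice_det_eq0 with (K := 28 * t ^ 2); try congruence; auto.
  pose proof (pow_lt 2000 5 ltac:(lra)).
  pose proof (Rpower_fifth_pow Rad ltac:(lra)) as Ht5; pose proof Rpower_fifth_ge2000.
  rewrite Sa. set (s := t) in *. rewrite <- Ht5.
  replace (9 / 4 * (28 * s ^ 2) ^ 4) with (s ^ 8 * (9 / 4 * 28 ^ 4)) by ring.
  replace ((s ^ 5) ^ 2) with (s ^ 8 * s ^ 2) by ring.
  apply Rmult_lt_compat_l; [apply pow_lt; lra | nra].
Qed.

Lemma on_plane_of_triple_near N p a a1 a2 a3 x :
  on_sphere Rad a1 -> on_sphere Rad a2 -> on_sphere Rad a3 -> on_sphere Rad x ->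
  a1 <> a2 -> a1 <> a3 -> a2 <> a3 ->
  near a a1 -> near a a2 -> near a a3 -> n2 (vsub (vec x) (vec a)) <= 10 * t ^ 2 ->
  on_plane N p a1 -> on_plane N p a2 -> on_plane N p a3 -> on_plane N p x.
Proof.
  unfold near, on_plane.
  intros S1 S2 S3 Sx n12 n13 n23 N1 N2 N3 Nx P1 P2 P3.
  assert (chord_le : forall y, n2 (vsub (vec y) (vec a)) <= 10 * t ^ 2 ->
                     n2 (vsub (vec y) (vec a1)) <= 28 * t ^ 2).
  { intros y Hy. pose proof (n2_sub_le (vec y) (vec a) (vec a1)).
    rewrite (n2_sub_sym (vec a)) in *. lra. }
  assert (T0 : 0 <= t ^ 2) by apply pow2_ge_0.
  pose proof (det_eq0_of_chords_le a1 a2 a3 x S1 S2 S3 Sx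
                (chord_le a2 ltac:(lra)) (chord_le a3 ltac:(lra)) (chord_le x Nx)) as Hdet.
  apply n2_vec_on_sphere in S1, S2, S3.
  assert (Hcross : n2 (cross (vsub (vec a2) (vec a1)) (vsub (vec a3) (vec a1))) <> 0).
  { apply cross_chords_neq0; try congruence;
      intro E; apply vec_inj in E; congruence. }
  rewrite dot_sub in P1, P2, P3 |- *.
  assert (E2 : dot N (vsub (vec a2) (vec a1)) = 0) by (rewrite dot_sub; lra).
  assert (E3 : dot N (vsub (vec a3) (vec a1)) = 0) by (rewrite dot_sub; lra).
  pose proof (dot_eq0_of_det_eq0 N _ _ _ E2 E3 Hcross Hdet) as Ex.
  rewrite dot_sub in Ex; lra.
Qed.

Lemma component_on_plane m p q r :
  on_sphere Rad m -> p <> q -> p <> r -> q <> r ->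
  gconnected Rad m p -> gconnected Rad m q -> gconnected Rad m r ->
  near m p -> near m q -> near m r ->
  forall x, gconnected Rad m x ->
    on_plane (cross (vsub (vec q) (vec p)) (vsub (vec r) (vec p))) p x.
Proof.
  intros Sm npq npr nqr Cp Cq Cr Np Nq Nr.
  set (N := cross (vsub (vec q) (vec p)) (vsub (vec r) (vec p))).
  assert (Sph : forall x, gconnected Rad m x -> on_sphere Rad x)
    by (intros; eapply gconnected_on_sphere; eauto).
  assert (T0 : 0 <= t ^ 2) by apply pow2_ge_0.
  assert (Near_all : forall n, gconnected Rad m n ->
            forall x, gconnected Rad m x -> near n x -> on_plane N p x).
  { apply (gconnected_ind Rad (fun n => forall x, gconnected Rad m x -> near n x -> on_plane N p x)).
    - intros x Cx Nx. unfold near in Nx.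
      apply (on_plane_of_triple_near N p m p q r x); auto; try lra; unfold on_plane, N.
      + rewrite dot_sub; ring.
      + apply dot_cross_l.
      + apply dot_cross_r.
    - intros a b Ca Pa Hab x Cx Nx.
      destruct (triple_near_or_pair a)
        as [[a1 [a2 [a3 [n12 [n13 [n23 [C1 [C2 [C3 [N1 [N2 N3]]]]]]]]]]]|[v Hv]].
      + assert (Cai : forall y, gconnected Rad a y -> gconnected Rad m y)
          by (intros y Hy; exact (rt_trans _ _ _ _ _ Ca Hy)).
        apply (on_plane_of_triple_near N p a a1 a2 a3 x); auto.
        unfold near in Nx. pose proof (adj_n2 _ _ _ Hab).
        pose proof (n2_sub_le (vec x) (vec b) (vec a)). lra.
      + exfalso. pose proof (gconnected_sym _ _ _ Ca) as Cam.
        destruct (Hv p (rt_trans _ _ _ _ _ Cam Cp)), (Hv q (rt_trans _ _ _ _ _ Cam Cq)),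
          (Hv r (rt_trans _ _ _ _ _ Cam Cr)); congruence. }
  intros x Cx. apply (Near_all x Cx x Cx).
  unfold near; replace (n2 _) with 0 by vec_ring; lra.
Qed.

Lemma component_in_affine_plane m : on_sphere Rad m -> in_affine_plane (component Rad m).
Proof.
  intros Sm.
  destruct (triple_near_or_pair m)
    as [[p [q [r [npq [npr [nqr [Cp [Cq [Cr [Np [Nq Nr]]]]]]]]]]]|[v Hv]].
  - apply (in_affine_plane_of_normal _ (cross (vsub (vec q) (vec p)) (vsub (vec r) (vec p))) p).
    + pose proof (gconnected_on_sphere _ _ _ Sm Cp) as Sp.
      pose proof (gconnected_on_sphere _ _ _ Sm Cq) as Sq.
      pose proof (gconnected_on_sphere _ _ _ Sm Cr) as Sr.
      apply n2_vec_on_sphere in Sp, Sq, Sr.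
      apply cross_chords_neq0; try congruence; intro E; apply vec_inj in E; congruence.
    + intros x [_ Cx]. exact (component_on_plane m p q r Sm npq npr nqr Cp Cq Cr Np Nq Nr x Cx).
  - apply (in_affine_plane_of_pair _ m v). intros x [_ Cx]; auto.
Qed.

End Component.

Theorem lemma9p2 :
  exists R0 : R, forall Rad : R, R0 <= Rad ->
    (exists k : Z, Rad ^ 2 = IZR k) ->
    forall m : zpt, on_sphere Rad m -> in_affine_plane (component Rad m).
Proof.
  exists (2000 ^ 5). intros Rad HR _ m Hm.
  exact (component_in_affine_plane Rad HR m Hm).
Qed.
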